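(* Let $n\geqslant2$, $\lambda>0$, distinct points $p_1,\ldots,p_M\in\mathbb{Z}^n$ and positive integers $n_1,\ldots,n_M$ be given, let $g=4\pi\sum_{j=1}^Mn_j\delta_{p_j}$ and $C=4\pi\sum_{j=1}^Mn_j$. Let $\Omega_0\subset\mathbb{Z}^n$ be a finite set containing $\{p_j\}_{j=1}^M$ and let $\Omega$ be a finite connected subset with $\Omega_0\subset\Omega$. Fix $K>2\lambda$, let $u_0=0$ and for $k\geqslant1$ let $u_k:\overline\Omega\to\mathbb{R}$ be the (unique) solution of $$(\Delta-K)u_k=\lambda e^{u_{k-1}}(e^{u_{k-1}}-1)+g-Ku_{k-1}\ \text{ on }\Omega,\qquad u_k=0\ \text{ on }\delta\Omega.$$ Define, for $u:\overline\Omega\to\mathbb{R}$, $$F(u)=\frac12D_\Omega(u)+\sum_{x\in\Omega}\Big[\frac\lambda2(e^{u(x)}-1)^2+g(x)u(x)\Big].$$ Then $c_0\geqslant F(u_1)\geqslant F(u_2)\geqslant\cdots\geqslant F(u_k)\geqslant\cdots$, where the constant $c_0$ depends only on $n$, $C$ and $\lambda$.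
   Context: $\mathbb{Z}^n$ is the integer lattice graph with $x\sim y$ iff $\sum_i|x_i-y_i|=1$. For a finite $\Omega\subset\mathbb{Z}^n$, $\delta\Omega=\{y\in\mathbb{Z}^n\setminus\Omega:\exists x\in\Omega,\ y\sim x\}$ and $\overline\Omega=\Omega\cup\delta\Omega$. For $u:\overline\Omega\to\mathbb{R}$ and $x\in\Omega$, $\Delta u(x)=\sum_{y\sim x}(u(y)-u(x))$. $\delta_p$ is the function equal to $1$ at $p$ and $0$ elsewhere. With $\nabla_{xy}f=f(y)-f(x)$, the Dirichlet energy on $\Omega$ is $D_\Omega(f)=\frac12\sum_{x,y\in\Omega,\,x\sim y}(\nabla_{xy}f)^2+\sum_{x\in\Omega,\,y\in\delta\Omega,\,x\sim y}(\nabla_{xy}f)^2$. *)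

From HB Require Import structures.
From mathcomp Require Import all_boot all_order all_algebra.
From mathcomp Require Import all_classical all_reals all_analysis.
Set Implicit Arguments. Unset Strict Implicit. Unset Printing Implicit Defensive.
Import Order.TTheory GRing.Theory Num.Theory.
Local Open Scope ring_scope.

Definition pt (n : nat) := {ffun 'I_n -> int}.

Definition adj n (x y : pt n) : bool := (\sum_(i < n) `|x i - y i|%N == 1)%N.

Definition shift n (x : pt n) (i : 'I_n) (s : int) : pt n :=
  [ffun j => if j == i then x j + s else x j].
Definition nbrs n (x : pt n) : seq (pt n) :=
  [seq shift x i 1 | i <- enum 'I_n] ++ [seq shift x i (-1) | i <- enum 'I_n].

(* Finite subsets of Z^n are duplicate-free lists. *)
Definition bdry n (Om : seq (pt n)) : seq (pt n) :=
  undup [seq y <- flatten (map (@nbrs n) Om) | y \notin Om].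
Definition lat_closure n (Om : seq (pt n)) : seq (pt n) := Om ++ bdry Om.

Definition lat_connected n (Om : seq (pt n)) : Prop :=
  forall x y, x \in Om -> y \in Om ->
    exists s : seq (pt n), [/\ all (mem Om) s, path (@adj n) x s & last x s = y].

Section Ops.
Variable R : realType.

(* Delta u (x) = sum_{y ~ x} (u y - u x)  (all neighbours of x in Omega lie in closure) *)
Definition lat_lap n (Om : seq (pt n)) (u : pt n -> R) (x : pt n) : R :=
  \sum_(y <- lat_closure Om | adj x y) (u y - u x).

Definition dirichlet n (Om : seq (pt n)) (f : pt n -> R) : R :=
  2^-1 * (\sum_(x <- Om) \sum_(y <- Om | adj x y) (f y - f x) ^+ 2)
  + \sum_(x <- Om) \sum_(y <- bdry Om | adj x y) (f y - f x) ^+ 2.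

Definition gsrc n M (p : 'I_M -> pt n) (m : 'I_M -> nat) (x : pt n) : R :=
  4 * pi * \sum_(j < M) (m j)%:R * (x == p j)%:R.

Definition energyF n (Om : seq (pt n)) (lam : R) (g : pt n -> R) (u : pt n -> R) : R :=
  2^-1 * dirichlet Om u
  + \sum_(x <- Om) (lam / 2 * (expR (u x) - 1) ^+ 2 + g x * u x).
End Ops.

(** A maximum principle keeps every u_k nonpositive.  On (-oo, 0] the
    potential h(t) = (e^t - 1)^2 / 2 satisfies h'' <= 1, so, writing
    w = u_k - u_{k-1} and summing by parts against the equation for u_k,
    F(u_k) - F(u_{k-1}) <= sum_x (lam/2 - K) w(x)^2 - D(w)/2, which is
    nonpositive since K > 2 lam.  Hence F(u_k) <= F(u_0) = 0, and c0 = 0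
    works. *)

From HB Require Import structures.
From mathcomp Require Import all_boot all_order all_algebra.
From mathcomp Require Import all_classical all_reals all_analysis.
From mathcomp Require Import ring lra.
Set Implicit Arguments. Unset Strict Implicit. Unset Printing Implicit Defensive.
Import Order.TTheory GRing.Theory Num.Theory.
Local Open Scope ring_scope.

Section ExpInequalities.
Variable R : realType.
Implicit Types a b s lam K g : R.

Lemma expRB_le_nonpos {a b} : a <= b -> b <= 0 -> 0 <= expR b - expR a <= b - a.
Proof.
move=> ab b0.
have -> : expR a = expR b * expR (a - b) by rewrite -expRD; congr expR; ring.
have := expR_ge1Dx (a - b); have := expR_gt0 b.
have : expR (a - b) <= 1 by rewrite expR_le1; lra.
have : expR b <= 1 by rewrite expR_le1.
move=> *; apply/andP; split; nra.
Qed.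

Lemma sqr_expRB_le {a b} : a <= 0 -> b <= 0 -> (expR b - expR a) ^+ 2 <= (b - a) ^+ 2.
Proof.
move=> a0 b0; case: (leP a b) => ab.
  by have /andP[] := expRB_le_nonpos ab b0; rewrite !expr2; nra.
by have /andP[] := expRB_le_nonpos (ltW ab) a0; rewrite !expr2; nra.
Qed.

(* h(t) = (e^t - 1)^2 / 2 has h'(t) = e^t (e^t - 1) and h'' <= 1 on (-oo, 0]. *)
Lemma sqr_expR_sub1_smooth {a b} : a <= 0 -> b <= 0 ->
  (expR b - 1) ^+ 2 / 2 - (expR a - 1) ^+ 2 / 2 - (b - a) * (expR a * (expR a - 1))
  <= (b - a) ^+ 2 / 2.
Proof.
move=> a0 b0.
have lip := sqr_expRB_le a0 b0.
have ea0 := expR_gt0 a.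
have ea1 : expR a <= 1 by rewrite expR_le1.
have convex : expR a * (1 + (b - a)) <= expR b.
  have -> : expR b = expR a * expR (b - a) by rewrite -expRD; congr expR; ring.
  by apply: ler_wpM2l; [lra | exact: expR_ge1Dx].
move: lip convex; move: (expR a) (expR b) ea0 ea1 => s t ? ? lip convex.
have -> : (t - 1) ^+ 2 / 2 - (s - 1) ^+ 2 / 2 - (b - a) * (s * (s - 1))
        = (t - s) ^+ 2 / 2 + (s - 1) * (t - s - s * (b - a)) by field.
have : (s - 1) * (t - s - s * (b - a)) <= 0 by apply: mulr_le0_ge0; nra.
lra.
Qed.

Lemma iteration_rhs_ge0 {lam K g s} : 0 < lam -> lam <= K -> 0 <= g -> s <= 0 ->
  0 <= lam * expR s * (expR s - 1) + g - K * s.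
Proof.
move=> lam0 lamK g0 s0.
have := expR_ge1Dx s; have := expR_gt0 s.
have : expR s <= 1 by rewrite expR_le1.
move=> es1 es0 es_ge.
have : lam * s <= lam * (expR s * (expR s - 1)) by apply: ler_wpM2l; nra.
rewrite mulrA; nra.
Qed.

Lemma iteration_pointwise_descent {lam K g a b L} :
  0 < lam -> 2 * lam < K -> a <= 0 -> b <= 0 ->
  L - K * b = lam * expR a * (expR a - 1) + g - K * a ->
  (lam / 2 * (expR b - 1) ^+ 2 + g * b) - (lam / 2 * (expR a - 1) ^+ 2 + g * a)
  - (b - a) * L <= 0.
Proof.
move=> lam0 lamK a0 b0 eqL.
have -> : L = K * (b - a) + lam * expR a * (expR a - 1) + g by lra.
have smooth := ler_wpM2l (ltW lam0) (sqr_expR_sub1_smooth a0 b0).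
have : 0 <= (b - a) ^+ 2 by exact: sqr_ge0.
rewrite !expr2 in smooth * => ?; nra.
Qed.

End ExpInequalities.

Lemma adj_sym n : symmetric (@adj n).
Proof. by move=> x y; rewrite /adj; congr (_ == _); apply: eq_bigr => i _; rewrite -abszN opprB. Qed.

Lemma exists_seq_argmax (R : realDomainType) (T : eqType) (f : T -> R) (s : seq T) :
  s != [::] -> exists2 x, x \in s & forall y, y \in s -> f y <= f x.
Proof.
elim: s => [//|z s IH] _; case: (eqVneq s [::]) => [->|/IH[x xs maxx]].
  by exists z; rewrite ?mem_seq1 // => y; rewrite mem_seq1 => /eqP->.
have [fzx|fxz] := leP (f z) (f x).
  by exists x; [rewrite inE xs orbT | move=> y /[!inE] /orP[/eqP->|/maxx]].
exists z; first by rewrite inE eqxx.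
by move=> y /[!inE] /orP[/eqP->//|/maxx/le_trans]; apply; apply: ltW.
Qed.

Section LatticeCalculus.
Variables (R : realType) (n : nat) (Om : seq (pt n)).
Implicit Types (f b w : pt n -> R) (phi : pt n -> pt n -> R).

Definition edge_sum phi : R :=
  2^-1 * (\sum_(x <- Om) \sum_(y <- Om | adj x y) phi x y)
  + \sum_(x <- Om) \sum_(y <- bdry Om | adj x y) phi x y.

Lemma edge_sumD phi1 phi2 :
  edge_sum (fun x y => phi1 x y + phi2 x y) = edge_sum phi1 + edge_sum phi2.
Proof.
have sumD r : \sum_(x <- Om) \sum_(y <- r | adj x y) (phi1 x y + phi2 x y)
  = \sum_(x <- Om) \sum_(y <- r | adj x y) phi1 x y
    + \sum_(x <- Om) \sum_(y <- r | adj x y) phi2 x y.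
  by rewrite -big_split; apply: eq_bigr => x _; rewrite big_split.
rewrite /edge_sum !sumD; lra.
Qed.

Lemma edge_sumZ c phi : edge_sum (fun x y => c * phi x y) = c * edge_sum phi.
Proof.
have sumZ r : \sum_(x <- Om) \sum_(y <- r | adj x y) (c * phi x y)
  = c * \sum_(x <- Om) \sum_(y <- r | adj x y) phi x y.
  by rewrite mulr_sumr; apply: eq_bigr => x _; rewrite mulr_sumr.
rewrite /edge_sum !sumZ; lra.
Qed.

Lemma eq_edge_sum phi1 phi2 :
  (forall x y, phi1 x y = phi2 x y) -> edge_sum phi1 = edge_sum phi2.
Proof. by move=> eq12; congr edge_sum; apply/funext => x; apply/funext => y. Qed.

Lemma dirichletE f : dirichlet Om f = edge_sum (fun x y => (f y - f x) ^+ 2).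
Proof. by []. Qed.

Lemma dirichlet_ge0 f : 0 <= dirichlet Om f.
Proof.
apply: addr_ge0; first apply: mulr_ge0; rewrite ?invr_ge0 //;
  by apply: sumr_ge0 => x _; apply: sumr_ge0 => y _; apply: sqr_ge0.
Qed.

Lemma dirichlet_polarization f b :
  dirichlet Om f = dirichlet Om b
    - 2 * edge_sum (fun x y => (b y - b x) * ((b y - f y) - (b x - f x)))
    + dirichlet Om (fun x => b x - f x).
Proof.
rewrite !dirichletE -mulNr -edge_sumZ -!edge_sumD.
by apply: eq_edge_sum => x y /=; ring.
Qed.

Lemma sum_adj_swap phi :
  \sum_(x <- Om) \sum_(y <- Om | adj x y) phi x y
  = \sum_(x <- Om) \sum_(y <- Om | adj x y) phi y x.
Proof.
under eq_bigr => x _ do rewrite big_mkcond.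
rewrite exchange_big; apply: eq_bigr => x _.
by rewrite [RHS]big_mkcond; apply: eq_bigr => y _; rewrite adj_sym.
Qed.

Lemma green_identity b w : (forall y, y \in bdry Om -> w y = 0) ->
  edge_sum (fun x y => (b y - b x) * (w y - w x)) = - \sum_(x <- Om) w x * lat_lap Om b x.
Proof.
move=> w_bdry.
have interior : \sum_(x <- Om) \sum_(y <- Om | adj x y) (b y - b x) * (w y - w x)
    = - 2 * \sum_(x <- Om) \sum_(y <- Om | adj x y) w x * (b y - b x).
  have -> : \sum_(x <- Om) \sum_(y <- Om | adj x y) (b y - b x) * (w y - w x)
      = \sum_(x <- Om) \sum_(y <- Om | adj x y) (w y * (b y - b x))
        - \sum_(x <- Om) \sum_(y <- Om | adj x y) w x * (b y - b x).
    by rewrite -sumrB; apply: eq_bigr => x _; rewrite -sumrB; apply: eq_bigr => y _; ring.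
  rewrite sum_adj_swap -[X in X - _]opprK -sumrN.
  under eq_bigr => x _ do rewrite -sumrN.
  under eq_bigr => x _ do under eq_bigr => y _ do rewrite -mulrN opprB.
  lra.
have boundary : \sum_(x <- Om) \sum_(y <- bdry Om | adj x y) (b y - b x) * (w y - w x)
    = - \sum_(x <- Om) \sum_(y <- bdry Om | adj x y) w x * (b y - b x).
  rewrite -sumrN; apply: eq_bigr => x _; rewrite -sumrN.
  by rewrite big_seq_cond [RHS]big_seq_cond; apply: eq_bigr => y /andP[/w_bdry-> _]; ring.
rewrite /edge_sum interior boundary /lat_lap /lat_closure.
under [in RHS]eq_bigr => x _ do rewrite big_cat mulrDr /= !mulr_sumr.
rewrite big_split /=; lra.
Qed.

Lemma lat_max_principle K b : 0 < K ->
  (forall y, y \in bdry Om -> b y = 0) ->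
  (forall x, x \in Om -> 0 <= lat_lap Om b x - K * b x) ->
  forall x, x \in Om -> b x <= 0.
Proof.
move=> K0 b_bdry superharm x xOm.
have [x0 x0Om maxb] : exists2 x0, x0 \in Om & forall y, y \in Om -> b y <= b x0.
  by apply: exists_seq_argmax; case: Om xOm.
apply: le_trans (maxb x xOm) _; rewrite leNgt; apply/negP => b0.
have : lat_lap Om b x0 <= 0.
  rewrite /lat_lap big_seq_cond; apply: sumr_le0 => y /andP[+ _].
  rewrite subr_le0 mem_cat => /orP[/maxb //|/b_bdry->]; exact: ltW.
have := superharm x0 x0Om; nra.
Qed.

End LatticeCalculus.

Section Iteration.
Variables (R : realType) (n : nat) (Om : seq (pt n)) (lam K : R) (g : pt n -> R).
Hypotheses (lam_gt0 : 0 < lam) (lamK : 2 * lam < K).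

Lemma iteration_nonpos (a b : pt n -> R) : (forall x, 0 <= g x) ->
  (forall x, x \in Om -> a x <= 0) -> (forall y, y \in bdry Om -> b y = 0) ->
  (forall x, x \in Om -> lat_lap Om b x - K * b x
     = lam * expR (a x) * (expR (a x) - 1) + g x - K * a x) ->
  forall x, x \in Om -> b x <= 0.
Proof.
move=> g0 a_nonpos b_bdry eq_b; apply: (@lat_max_principle _ _ _ K) => //.
  by apply: lt_trans lamK; rewrite mulr_gt0.
move=> x xOm; rewrite eq_b //; apply: iteration_rhs_ge0; rewrite ?a_nonpos //.
by have := lamK; have := lam_gt0; lra.
Qed.

Lemma energyF_iteration_le (a b : pt n -> R) :
  (forall x, x \in Om -> a x <= 0) -> (forall x, x \in Om -> b x <= 0) ->
  (forall y, y \in bdry Om -> a y = 0) -> (forall y, y \in bdry Om -> b y = 0) ->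
  (forall x, x \in Om -> lat_lap Om b x - K * b x
     = lam * expR (a x) * (expR (a x) - 1) + g x - K * a x) ->
  energyF Om lam g b <= energyF Om lam g a.
Proof.
move=> a_nonpos b_nonpos a_bdry b_bdry eq_b.
have w_bdry y : y \in bdry Om -> b y - a y = 0 by move=> yb; rewrite a_bdry ?b_bdry ?subrr.
have polar := dirichlet_polarization Om a b.
have green := green_identity (w := fun x => b x - a x) b w_bdry.
have := dirichlet_ge0 Om (fun x => b x - a x).
have : \sum_(x <- Om) (lam / 2 * (expR (b x) - 1) ^+ 2 + g x * b x)
     - \sum_(x <- Om) (lam / 2 * (expR (a x) - 1) ^+ 2 + g x * a x)
     - \sum_(x <- Om) (b x - a x) * lat_lap Om b x <= 0.
  rewrite -!sumrB big_seq; apply: sumr_le0 => x xOm.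
  exact: iteration_pointwise_descent (a_nonpos x xOm) (b_nonpos x xOm) (eq_b x xOm).
rewrite /energyF; lra.
Qed.

End Iteration.

Lemma energyF0 (R : realType) n (Om : seq (pt n)) (lam : R) (g : pt n -> R) :
  energyF Om lam g (fun=> 0) = 0.
Proof.
rewrite /energyF /dirichlet !big1 ?(mulr0, addr0) // => x _;
  rewrite ?big1 // => *; by rewrite ?expR0 subrr expr2 !mulr0 ?addr0.
Qed.

Lemma gsrc_ge0 (R : realType) n M (p : 'I_M -> pt n) (m : 'I_M -> nat) x :
  0 <= gsrc R p m x.
Proof.
rewrite /gsrc !mulr_ge0 ?pi_ge0 //.
by apply: sumr_ge0 => j _; rewrite mulr_ge0 ?ler0n.
Qed.

Theorem lemma3p5 (R : realType) (n : nat) (hn : (2 <= n)%N) (lam : R) (hlam : 0 < lam)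
    (C : R) :
  exists c0 : R,
  forall (M : nat) (p : 'I_M -> pt n) (m : 'I_M -> nat),
    injective p -> (forall j, (0 < m j)%N) ->
    C = 4 * pi * \sum_(j < M) (m j)%:R ->
  forall (Om0 Om : seq (pt n)),
    uniq Om0 -> (forall j, p j \in Om0) ->
    uniq Om -> lat_connected Om -> (forall x, x \in Om0 -> x \in Om) ->
  forall (K : R), 2 * lam < K ->
  forall u : nat -> pt n -> R,
    (forall x, u 0%N x = 0) ->
    (forall k : nat, (1 <= k)%N -> forall x, x \in Om ->
       lat_lap Om (u k) x - K * u k x =
       lam * expR (u k.-1 x) * (expR (u k.-1 x) - 1) + gsrc R p m x - K * u k.-1 x) ->
    (forall k : nat, (1 <= k)%N -> forall x, x \in bdry Om -> u k x = 0) ->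
  energyF Om lam (gsrc R p m) (u 1%N) <= c0 /\
  (forall k : nat, (1 <= k)%N ->
     energyF Om lam (gsrc R p m) (u k.+1) <= energyF Om lam (gsrc R p m) (u k)).
Proof.
exists 0 => M p m _ _ _ Om0 Om _ _ _ _ _ K lamK u u0 eq_u bdry_u.
have u_bdry k y : y \in bdry Om -> u k y = 0 by case: k => [|k]; [rewrite u0 | exact: bdry_u].
have u_nonpos k : forall x, x \in Om -> u k x <= 0.
  elim: k => [|k IH]; first by move=> x _; rewrite u0.
  exact: (iteration_nonpos hlam lamK (gsrc_ge0 R p m) IH (u_bdry k.+1) (eq_u k.+1 isT)).
have descent k : energyF Om lam (gsrc R p m) (u k.+1) <= energyF Om lam (gsrc R p m) (u k).
  apply: (energyF_iteration_le hlam lamK (u_nonpos k) (u_nonpos k.+1) (u_bdry k) (u_bdry k.+1)).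
  exact: eq_u.
split=> [|k _]; last exact: descent.
have <- : energyF Om lam (gsrc R p m) (fun=> 0) = 0 by exact: energyF0.
by have -> : (fun=> 0) = u 0%N by apply/funext => x; rewrite u0.
Qed.
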